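(* For all integers $n,k,p$ with $n\ge 9$, $3\le k\le n/3$ and $p\ge\max\{k-1,\lceil n/(k-1)\rceil\}$, there exists a feasible homogeneous PV graph $\vec G_R$ with $n$ sites, $k$ carriers and period $p$ such that $$\mathcal M(\vec G_R)\ \ge\ (k-2)(p+1)+\left\lfloor \frac{n}{k-1}\right\rfloor .$$ (This holds even though the agent knows $\vec G_R$, $k$, $p$ and has unlimited memory.)
   Context: A PV (periodically varying) system consists of a finite set $S$ of $n$ sites and a set $C$ of $k\le n$ carriers. Each carrier $c$ has a route $\pi(c)=\langle x_0,\dots,x_{p(c)-1}\rangle$, a finite sequence of sites (repetitions allowed) of length $p(c)\ge1$ called its period; $\pi(c)[j]=x_{j\bmod p(c)}$. At each time $t\in\mathbb N$ carrier $c$ is at $\pi(c)[t]$ and moves to $\pi(c)[t+1]$. The PV graph $\vec G_R$ is the directed edge-labelled multigraph on $S$ with edges $(x_i,x_{i+1},i)$, $0\le i<p(c)$, for every carrier. The period of the system is $p=\max_c p(c)$; the system is homogeneous if all $p(c)$ are equal, heterogeneous otherwise. An exploring agent is injected at time $0$ at a site of $\mathrm{start}(\vec G_R)=\{\pi(c)[0]:c\in C\}$; if at time $t$ it is at site $x$ it must either ride one step with some carrier $c$ with $\pi(c)[t]=x$ (one move, to $\pi(c)[t+1]$) or halt; it cannot wait. A walk is a concrete cover if it visits every site. A strategy solves PVG-Exploration of $\vec G_R$ if from every injection site the agent visits all sites and halts in finite time. $\vec G_R$ is feasible if from the starting point of every carrier some realizable walk is a concrete cover. For feasible $\vec G_R$,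 $\mathcal M(\vec G_R)$ denotes the minimum, over all deterministic strategies solving PVG-Exploration of $\vec G_R$ (which may use full knowledge of $\vec G_R$ and unlimited memory), of the maximum over injection sites of the number of moves performed. *)

From mathcomp Require Import all_boot.
Set Implicit Arguments. Unset Strict Implicit. Unset Printing Implicit Defensive.

Section PV.
Variables (n k p : nat).
(* A homogeneous PV system with sites 'I_n, carriers 'I_k and common period p:
   carrier c has route <R c 0, ..., R c (p-1)>; values R c t for t >= p are
   irrelevant. *)
Variable R : 'I_k -> nat -> 'I_n.

Definition pv_at (c : 'I_k) (t : nat) : 'I_n := R c (t %% p).

Definition in_start (x : 'I_n) : Prop := exists c : 'I_k, pv_at c 0 = x.

Fixpoint realizable (x : 'I_n) (t : nat) (w : seq 'I_k) : Prop :=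
  match w with
  | [::] => True
  | c :: w' => pv_at c t = x /\ realizable (pv_at c t.+1) t.+1 w'
  end.

Fixpoint visited (x : 'I_n) (t : nat) (w : seq 'I_k) : seq 'I_n :=
  x :: match w with
       | [::] => [::]
       | c :: w' => visited (pv_at c t.+1) t.+1 w'
       end.

Definition concrete_cover (x0 : 'I_n) (w : seq 'I_k) : Prop :=
  forall y : 'I_n, y \in visited x0 0 w.

Definition feasible : Prop :=
  forall c : 'I_k, exists w : seq 'I_k,
    realizable (pv_at c 0) 0 w /\ concrete_cover (pv_at c 0) w.

(* A deterministic strategy with full knowledge of the system and unlimited
   memory: given the injection site and the full history of moves so far
   (the time is the length of the history), it either rides a carrier
   (Some c) or halts (None). *)
Definition strategy := 'I_n -> seq 'I_k -> option 'I_k.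

Fixpoint follows (s : strategy) (x0 : 'I_n) (h w : seq 'I_k) : Prop :=
  match w with
  | [::] => s x0 h = None
  | c :: w' => s x0 h = Some c /\ follows s x0 (rcons h c) w'
  end.

Definition explores_in (s : strategy) (x0 : 'I_n) (m : nat) : Prop :=
  exists w : seq 'I_k, [/\ follows s x0 [::] w, realizable x0 0 w,
                          concrete_cover x0 w & size w = m].

Definition solves (s : strategy) : Prop :=
  forall x0, in_start x0 -> exists m, explores_in s x0 m.

Definition worst_cost (s : strategy) (m : nat) : Prop :=
  (forall x0, in_start x0 -> exists2 m', m' <= m & explores_in s x0 m') /\
  (exists2 x0, in_start x0 & explores_in s x0 m).

Definition is_M (m : nat) : Prop :=
  (exists s, worst_cost s m) /\ (forall s m', worst_cost s m' -> m <= m').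

End PV.

Definition ceil_div (a b : nat) : nat := (a + b.-1) %/ b.

(* The witness system has a hub site 0 (where every carrier starts), k
   "leaf" sites 1, ..., k, and interior sites.  Carrier c visits the hub at
   phase 0 of its period, its own leaf c+1 at phase p-1, and fresh interior
   sites at the phases in between.  All carriers meet at the hub at every
   multiple of p, so the agent can ride carrier 0 for a period, then
   carrier 1, and so on: the system is feasible.  Conversely leaf d can only
   be entered at a time congruent to p-1 modulo p, and distinct leaves need
   distinct such times, so by pigeonhole any covering walk needs k*p - 1
   moves (Lemma [phase_locked_cover_bound]).  Since the hub is the only
   injection site, M equals the length of a shortest covering walk from it,
   which is at least k*p - 1 >= (k-2)(p+1) + floor(n/(k-1)). *)
From Stdlib Require Import Classical Wf_nat.
From mathcomp Require Import all_boot zify.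

Set Implicit Arguments.
Unset Strict Implicit.
Unset Printing Implicit Defensive.

Section AnySystem.
Variables (n k p : nat) (R : 'I_k -> nat -> 'I_n).

Lemma size_visited x t w : size (visited p R x t w) = (size w).+1.
Proof. by elim: w x t => [|c w IH] x t //=; rewrite IH. Qed.

Lemma visited_nth_carrier x t w : realizable p R x t w ->
  forall i, 0 < i <= size w ->
  exists c, pv_at p R c (t + i) = nth x (visited p R x t w) i.
Proof.
elim: w x t => [|c w IH] x t /=; first by move=> _ i; case: i.
move=> [_ Hw] [//|[|i]] Hi /=.
  by exists c; rewrite addn1; case: (w).
have [c' Hc'] := IH _ _ Hw i.+1 Hi.
by exists c'; rewrite -addSnnS Hc' (set_nth_default x) // size_visited.
Qed.

Lemma carrier_schedule_walk (g : nat -> 'I_k) len t :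
  (forall i, t <= i < t + len -> pv_at p R (g i) i.+1 = pv_at p R (g i.+1) i.+1) ->
  realizable p R (pv_at p R (g t) t) t [seq g i | i <- iota t len] /\
  visited p R (pv_at p R (g t) t) t [seq g i | i <- iota t len] =
    [seq pv_at p R (g i) i | i <- iota t len.+1].
Proof.
elim: len t => [|len IH] t meet //.
have meet' i : t.+1 <= i < t.+1 + len ->
    pv_at p R (g i) i.+1 = pv_at p R (g i.+1) i.+1.
  by move=> Hi; apply: meet; lia.
have [Hr Hv] := IH t.+1 meet'.
have meet_t : pv_at p R (g t) t.+1 = pv_at p R (g t.+1) t.+1 by apply: meet; lia.
by rewrite /= meet_t Hv.
Qed.

(* Pigeonhole bound: if l distinct sites other than the start xs can only be
   occupied at times congruent to p-1 modulo p, every covering walk from xs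
   needs l * p - 1 moves, since no two of them fit in one period. *)
Lemma phase_locked_cover_bound (l : nat) (leaf : 'I_l -> 'I_n) (xs : 'I_n) :
  0 < p -> injective leaf -> (forall d, leaf d != xs) ->
  (forall c t d, pv_at p R c t = leaf d -> t %% p = p.-1) ->
  forall w, realizable p R xs 0 w -> concrete_cover p R xs w ->
  l * p - 1 <= size w.
Proof.
move=> p_gt0 leaf_inj leaf_neq phase w Hr Hc.
rewrite leqNgt; apply/negP => short.
pose time d := index (leaf d) (visited p R xs 0 w).
have time_ok d : time d <= size w /\ time d %% p = p.-1.
  have at_time : nth xs (visited p R xs 0 w) (time d) = leaf d
    by rewrite nth_index.
  have time_lt : time d < (size w).+1
    by rewrite -(size_visited xs 0 w) index_mem.
  have time_gt0 : 0 < time d.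
    rewrite lt0n; apply: contraNneq (leaf_neq d) => t0.
    by rewrite -at_time t0; case: (w).
  have in_range : 0 < time d <= size w by rewrite time_gt0.
  have [c Hcar] := visited_nth_carrier Hr in_range.
  by split=> //; apply: (phase c _ d); rewrite -[time d]add0n Hcar.
have block_lt d : time d %/ p < l.-1.
  have [le_w mod_t] := time_ok d.
  rewrite ltnNge; apply/negP => late_block.
  have : l.-1 * p <= time d %/ p * p by rewrite leq_mul2r late_block orbT.
  by have := divn_eq (time d) p; rewrite mod_t; nia.
have block_inj : injective (fun d => Ordinal (block_lt d)).
  move=> d1 d2 /(congr1 val) /= same_block; apply: leaf_inj.
  have [_ m1] := time_ok d1; have [_ m2] := time_ok d2.
  rewrite -(nth_index xs (Hc (leaf d1))) -(nth_index xs (Hc (leaf d2))).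
  by rewrite -/(time d1) -/(time d2) (divn_eq (time d1) p) (divn_eq (time d2) p)
    m1 m2 same_block.
by have := leq_card _ block_inj; rewrite !card_ord; lia.
Qed.

Definition replay (W : seq 'I_k) : strategy n k :=
  fun _ h => ohead (drop (size h) W).

Lemma replay_follows W x0 h w : drop (size h) W = w -> follows (replay W) x0 h w.
Proof.
elim: w h => [|c w IH] h /= Hd; first by rewrite /replay Hd.
split; first by rewrite /replay Hd.
by apply: IH; rewrite size_rcons -addn1 addnC -drop_drop Hd drop1.
Qed.

Lemma replay_worst_cost (W : seq 'I_k) (xs : 'I_n) :
  (forall x0, in_start p R x0 -> x0 = xs) -> in_start p R xs ->
  realizable p R xs 0 W -> concrete_cover p R xs W ->
  worst_cost p R (replay W) (size W).
Proof.
move=> single Hxs HW HC.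
have explore : explores_in p R (replay W) xs (size W).
  by exists W; split=> //; exact: (@replay_follows W xs [::] W (drop0 W)).
split; last by exists xs.
by move=> x0 /single ->; exists (size W).
Qed.

Lemma is_M_exists : (exists s m, worst_cost p R s m) -> exists m, is_M p R m.
Proof.
move=> [s [m Hsm]].
have [m0 [[[s0 Hs0] least] _]] :=
  dec_inh_nat_subset_has_unique_least_element
    (fun m => exists s, worst_cost p R s m) (fun m => classic _)
    (ex_intro _ m (ex_intro _ s Hsm)).
by exists m0; split; [exists s0 | move=> s' m' Hs'; apply/leP/least; exists s'].
Qed.

Lemma worst_cost_ge (B : nat) (xs : 'I_n) s m : in_start p R xs ->
  (forall w, realizable p R xs 0 w -> concrete_cover p R xs w -> B <= size w) ->
  worst_cost p R s m -> B <= m.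
Proof.
move=> Hxs long [all_starts _].
have [m' le_m' [w [_ Hr Hc size_w]]] := all_starts xs Hxs.
by apply: leq_trans le_m'; rewrite -size_w; exact: long.
Qed.

End AnySystem.

Section Construction.
Variables (n k p : nat).
Hypothesis k_lt_n : k.+1 < n.

Definition site (c j : nat) : nat :=
  if j == 0 then 0
  else if j == p.-1 then c.+1
  else minn (k + c * (p - 2) + j) n.-1.

Lemma site_lt (c : 'I_k) j : site c j < n.
Proof.
rewrite /site; case: ifP => _; first lia.
by case: ifP => _; [have := ltn_ord c | have := geq_minr (k + c * (p - 2) + j) n.-1]; lia.
Qed.

Definition route (c : 'I_k) (j : nat) : 'I_n := Ordinal (site_lt c j).

Definition hub : 'I_n := Ordinal (ltn_trans (ltn0Sn k) k_lt_n).

Lemma leaf_lt (d : 'I_k) : d.+1 < n.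
Proof. by have := ltn_ord d; lia. Qed.

Definition leaf (d : 'I_k) : 'I_n := Ordinal (leaf_lt d).

Lemma route_start c : pv_at p route c 0 = hub.
Proof. by apply: val_inj; rewrite /= mod0n. Qed.

Lemma single_start x0 : in_start p route x0 -> x0 = hub.
Proof. by case=> c <-; exact: route_start. Qed.

Lemma leaf_phase c t d : pv_at p route c t = leaf d -> t %% p = p.-1.
Proof.
move/(congr1 val); rewrite /= /site.
case: ifP => [_ //|t0]; case: ifP => [/eqP //|_].
have := geq_minr (k + c * (p - 2) + t %% p) n.-1.
have := ltn_ord d; move: t0 => /negbT; move: (t %% p) (c * (p - 2)) => r m; lia.
Qed.

(* From now on the period is long enough for the routes to cover all sites. *)
Hypotheses (k_gt0 : 0 < k) (p_ge3 : 3 <= p) (n_small : n <= k * (p - 2) + k + 1).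

Lemma site_onto (y : 'I_n) : exists c : 'I_k, exists2 j, j < p & site c j = y.
Proof.
case: (posnP y) => [y0|y_gt0].
  by exists (Ordinal k_gt0), 0; rewrite /site ?eqxx ?y0 //; lia.
case: (leqP y k) => y_le_k.
  have yk : y.-1 < k by lia.
  exists (Ordinal yk), p.-1; first lia.
  rewrite /site /= ifN_eq ?eqxx; lia.
set z := y - k.+1.
have p2_gt0 : 0 < p - 2 by lia.
have zk : z %/ (p - 2) < k by rewrite ltn_divLR //; have := ltn_ord y; lia.
have zmod := ltn_pmod z p2_gt0.
exists (Ordinal zk), (z %% (p - 2)).+1; first lia.
rewrite /site /= ifN_eq; last lia.
have := divn_eq z (p - 2); have := ltn_ord y.
move: (z %/ (p - 2) * (p - 2)) (z %% (p - 2)) zmod => q r; lia.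
Qed.

Definition tour_carrier (i : nat) : 'I_k := insubd (Ordinal k_gt0) (i %/ p).

Definition tour : seq 'I_k := [seq tour_carrier i | i <- iota 0 (k * p)].

(* Consecutive carriers of the tour meet, either on a common route or at
   the hub at the end of a period, so the tour is a legal walk. *)
Lemma tour_walk :
  realizable p route hub 0 tour /\
  visited p route hub 0 tour = [seq pv_at p route (tour_carrier i) i | i <- iota 0 (k * p).+1].
Proof.
rewrite -(route_start (tour_carrier 0)); apply: carrier_schedule_walk => i _.
case: (boolP (p %| i.+1)) => [/eqP at_hub | not_hub].
  by apply: val_inj; rewrite /= at_hub.
by rewrite /tour_carrier divnS ?(negbTE not_hub) ?addn0 //; lia.
Qed.

(* The tour passes through every phase of every route, hence every site. *)
Lemma tour_cover : concrete_cover p route hub tour.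
Proof.
move=> y; rewrite (proj2 tour_walk).
have [c [j j_lt_p site_y]] := site_onto y.
apply/mapP; exists (c * p + j); first by rewrite mem_iota; have := ltn_ord c; nia.
have block : (c * p + j) %/ p = c by rewrite divnMDl ?divn_small ?addn0 //; lia.
apply: val_inj; rewrite /= /tour_carrier insubdK ?block; last exact: ltn_ord.
by rewrite modnMDl modn_small // site_y.
Qed.

Lemma construction_feasible : feasible p route.
Proof. by move=> c; exists tour; rewrite route_start; split; [case: tour_walk|exact: tour_cover]. Qed.

Lemma construction_cover_bound w :
  realizable p route hub 0 w -> concrete_cover p route hub w -> k * p - 1 <= size w.
Proof.
apply: (phase_locked_cover_bound (leaf := leaf)); first lia.
- by move=> d1 d2 /(congr1 val) [] /val_inj.
- by move=> d; apply/eqP => /(congr1 val).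
- exact: leaf_phase.
Qed.

Lemma construction_M : exists m, is_M p route m /\ k * p - 1 <= m.
Proof.
have hub_start : in_start p route hub by exists (Ordinal k_gt0); exact: route_start.
have [m M_m] : exists m, is_M p route m.
  apply: is_M_exists; exists (replay tour), (size tour).
  by apply: replay_worst_cost; [exact: single_start | | case: tour_walk | exact: tour_cover].
exists m; split=> //; have [[s Hs] _] := M_m.
exact: worst_cost_ge hub_start construction_cover_bound Hs.
Qed.

End Construction.

Lemma ceil_div_le n d p : 0 < d -> ceil_div n d <= p -> n <= d * p.
Proof. by move=> d_gt0; rewrite /ceil_div -ltnS ltn_divLR //; lia. Qed.

Lemma period_ge3 n k p : 3 <= k -> 3 * k <= n -> n <= k.-1 * p -> 3 <= p.
Proof. by nia. Qed.

Lemma sites_fit n k p : 3 <= p -> k.-1 <= p -> n <= k.-1 * p ->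
  n <= k * (p - 2) + k + 1.
Proof. by nia. Qed.

Lemma cover_bound_dominates k p q : 2 <= k -> k.-1 <= p -> q <= p ->
  (k - 2) * (p + 1) + q <= k * p - 1.
Proof. by nia. Qed.

Theorem mainTheorem3 (n k p : nat) :
  9 <= n -> 3 <= k -> 3 * k <= n ->
  maxn k.-1 (ceil_div n k.-1) <= p ->
  exists R : 'I_k -> nat -> 'I_n,
    feasible p R /\
    exists m, is_M p R m /\ (k - 2) * (p + 1) + n %/ k.-1 <= m.
Proof.
move=> n_ge9 k_ge3 kn; rewrite geq_max => /andP [k_le_p ceil_le_p].
have k_gt0 : 0 < k by lia.
have n_le_kp : n <= k.-1 * p by apply: ceil_div_le ceil_le_p; lia.
have p_ge3 := period_ge3 k_ge3 kn n_le_kp.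
have k_lt_n : k.+1 < n by lia.
have n_small := sites_fit p_ge3 k_le_p n_le_kp.
exists (route p k_lt_n); split; first exact: construction_feasible.
have [m [Ms bound]] := construction_M k_lt_n k_gt0 p_ge3 n_small.
exists m; split=> //; apply: leq_trans bound.
apply: cover_bound_dominates => //; first lia.
by apply: leq_trans ceil_le_p; apply: leq_div2r; exact: leq_addr.
Qed.
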